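(* Let $P$ be a poset, let $\iota:\mathbf{JF}^+_P\to\mathbf{JF}_P$ be the inclusion, and let $M:\mathbf{JF}_P\to\mathbf{JF}^+_P$ be defined by $M(\mathcal{U})=\mathcal{U}^+$. Then $M$ is left adjoint to $\iota$.
   Context: A join-specification for $P$ is a set $\mathcal{U}\subseteq\wp(P)$ such that $\bigvee S$ exists in $P$ for every $S\in\mathcal{U}$ and $\{p\}\in\mathcal{U}$ for every $p\in P$. A $\mathcal{U}$-ideal is a down-closed $C$ with $\bigvee S\in C$ whenever $S\in\mathcal{U}$, $S\subseteq C$; $\mathcal{I}_{\mathcal{U}}$ is the complete lattice of $\mathcal{U}$-ideals; $\Gamma_{\mathcal{U}}(S)$ is the smallest $\mathcal{U}$-ideal containing $S$; $\mathcal{U}^+=\{S:\bigvee S\text{ exists and }\bigvee S\in\Gamma_{\mathcal{U}}(S)\}$; $\mathcal{U}$ is maximal if $\mathcal{U}=\mathcal{U}^+$ and frame-generating if $\mathcal{I}_{\mathcal{U}}$ is a frame. $\mathbf{JF}_P$ (resp. $\mathbf{JF}^+_P$) is the poset, viewed as a thin category, of frame-generating (resp. maximal frame-generating) join-specifications for $P$ ordered by inclusion. *)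

(* a poset is a type with a partial order relation given as
   explicit hypotheses; subsets are predicates [P -> Prop]. *)
Set Implicit Arguments.

Definition incl {T : Type} (A B : T -> Prop) : Prop := forall x, A x -> B x.

Section JoinSpec.
Variables (P : Type) (le : P -> P -> Prop).

Definition is_ub (S : P -> Prop) (x : P) : Prop := forall s, S s -> le s x.

Definition is_join (S : P -> Prop) (x : P) : Prop :=
  is_ub S x /\ forall y, is_ub S y -> le x y.

Definition join_exists (S : P -> Prop) : Prop := exists x, is_join S x.

Definition join_spec (U : (P -> Prop) -> Prop) : Prop :=
  (forall S, U S -> join_exists S) /\ (forall p, U (fun q => q = p)).

Definition U_ideal (U : (P -> Prop) -> Prop) (C : P -> Prop) : Prop :=
  (forall x y, le x y -> C y -> C x) /\
  (forall S x, U S -> incl S C -> is_join S x -> C x).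

Definition Gamma (U : (P -> Prop) -> Prop) (S : P -> Prop) : P -> Prop :=
  fun p => forall C, U_ideal U C -> incl S C -> C p.

Definition Uplus (U : (P -> Prop) -> Prop) : (P -> Prop) -> Prop :=
  fun S => exists x, is_join S x /\ Gamma U S x.

End JoinSpec.

Section SetLattice.
Variable P : Type.
Variable X : (P -> Prop) -> Prop.

Definition lub_in (F : (P -> Prop) -> Prop) (A : P -> Prop) : Prop :=
  X A /\ (forall B, F B -> incl B A) /\
  (forall C, X C -> (forall B, F B -> incl B C) -> incl A C).

Definition glb_in (F : (P -> Prop) -> Prop) (A : P -> Prop) : Prop :=
  X A /\ (forall B, F B -> incl A B) /\
  (forall C, X C -> (forall B, F B -> incl C B) -> incl C A).

Definition pair2 (a b : P -> Prop) : (P -> Prop) -> Prop :=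
  fun c => c = a \/ c = b.

(* (X, ⊆) is a frame: a complete lattice satisfying the infinite
   distributive law  a ∧ ⋁B = ⋁ { a ∧ b | b ∈ B }. *)
Definition is_frame : Prop :=
  (forall F, incl F X -> exists A, lub_in F A) /\
  (forall F, incl F X -> exists A, glb_in F A) /\
  (forall a F j m, X a -> incl F X -> lub_in F j -> glb_in (pair2 a j) m ->
     lub_in (fun c => exists b, F b /\ glb_in (pair2 a b) c) m).

End SetLattice.

Definition frame_generating {P : Type} (le : P -> P -> Prop)
  (U : (P -> Prop) -> Prop) : Prop :=
  join_spec le U /\ is_frame (U_ideal le U).

Definition maximal {P : Type} (le : P -> P -> Prop)
  (U : (P -> Prop) -> Prop) : Prop :=
  forall S, U S <-> Uplus le U S.

Definition JF {P : Type} (le : P -> P -> Prop) (U : (P -> Prop) -> Prop) : Prop :=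
  frame_generating le U.
Definition JFplus {P : Type} (le : P -> P -> Prop) (U : (P -> Prop) -> Prop) : Prop :=
  frame_generating le U /\ maximal le U.

From Stdlib Require Import FunctionalExtensionality PropExtensionality.

Set Implicit Arguments.

(* U ↦ U⁺ is a closure operator on join-specifications.  It is monotone and
   inflationary, and U⁺ has exactly the same ideals as U: a U-ideal C
   containing S ∈ U⁺ contains Γ_U(S), hence ⋁S.  Therefore ℐ_{U⁺} = ℐ_U is
   still a frame and Γ_{U⁺} = Γ_U, so (U⁺)⁺ = U⁺.  The adjunction
   U⁺ ⊆ V ⟺ U ⊆ V for maximal V is then the usual one for a closure
   operator and its fixed points. *)

Section Closure.
Variables (P : Type) (le : P -> P -> Prop).
Hypothesis le_anti : forall x y, le x y -> le y x -> x = y.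

Lemma is_join_unique S x y : is_join le S x -> is_join le S y -> x = y.
Proof. intros [ubx lubx] [uby luby]. apply le_anti; auto. Qed.

Lemma Gamma_is_join U S x : U S -> is_join le S x -> Gamma le U S x.
Proof. intros US joinx C [_ C_join] SC. exact (C_join S x US SC joinx). Qed.

Lemma incl_Uplus {U} :
  (forall S, U S -> join_exists le S) -> incl U (Uplus le U).
Proof.
  intros U_joins S US. destruct (U_joins S US) as [x joinx].
  exists x. split; [exact joinx | exact (Gamma_is_join US joinx)].
Qed.

Lemma U_ideal_Uplus U : U_ideal le (Uplus le U) = U_ideal le U.
Proof.
  apply functional_extensionality; intro C.
  apply propositional_extensionality; split; intros [C_down C_join]; split; auto.
  - intros S x US SC joinx. apply (C_join S x); [| exact SC | exact joinx].
    exists x. split; [exact joinx | exact (Gamma_is_join US joinx)].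
  - intros S x [y [joiny Gy]] SC joinx.
    rewrite (is_join_unique joinx joiny). exact (Gy C (conj C_down C_join) SC).
Qed.

Lemma Uplus_idem U : Uplus le (Uplus le U) = Uplus le U.
Proof. unfold Uplus at 1, Gamma at 1. rewrite U_ideal_Uplus. reflexivity. Qed.

Lemma Uplus_mono U V : incl U V -> incl (Uplus le U) (Uplus le V).
Proof.
  intros UV S [x [joinx Gx]]. exists x. split; [exact joinx |].
  intros C [C_down C_join] SC. apply Gx; [| exact SC].
  split; [exact C_down |]. intros S' y US'. apply C_join, UV, US'.
Qed.

Lemma join_spec_Uplus U : join_spec le U -> join_spec le (Uplus le U).
Proof.
  intros [U_joins U_single]. split.
  - intros S [x [joinx _]]. exists x. exact joinx.
  - intro p. apply (incl_Uplus U_joins), U_single.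
Qed.

Lemma JFplus_Uplus U : JF le U -> JFplus le (Uplus le U).
Proof.
  intros [U_spec U_frame]. split; [split |].
  - exact (join_spec_Uplus U_spec).
  - rewrite U_ideal_Uplus. exact U_frame.
  - intro S. rewrite Uplus_idem. tauto.
Qed.

Lemma Uplus_incl_maximal U V :
  maximal le V -> incl U V -> incl (Uplus le U) V.
Proof. intros V_max UV S US. apply V_max. exact (Uplus_mono UV US). Qed.

End Closure.

Theorem corollary5p6 (P : Type) (le : P -> P -> Prop)
  (le_refl : forall x, le x x)
  (le_anti : forall x y, le x y -> le y x -> x = y)
  (le_trans : forall x y z, le x y -> le y z -> le x z) :
  (forall U, JF le U -> JFplus le (Uplus le U)) /\
  (forall U V, JF le U -> JF le V -> incl U V ->
     incl (Uplus le U) (Uplus le V)) /\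
  (forall U V, JF le U -> JFplus le V ->
     (incl (Uplus le U) V <-> incl U V)).
Proof.
  split; [| split].
  - intros U U_JF. exact (JFplus_Uplus le_anti U_JF).
  - intros U V _ _. apply Uplus_mono.
  - intros U V [[U_joins _] _] [_ V_max]. split.
    + intros UplusV S US. apply UplusV, (incl_Uplus U_joins), US.
    + apply (Uplus_incl_maximal V_max).
Qed.
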